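(* If $n\equiv 15$ or $n\equiv 21 \pmod{24}$, then $IK_n$ is not a $G$-graph.
   Context: $K_n$ is the complete simple graph on $n$ vertices and $IK_n$ its incidence graph (the simple graph whose vertices are the vertices and edges of $K_n$, each edge adjacent exactly to its two end-points). For a group $G$ and a multiset $S$ of elements of $G$, $\Phi(G,S)$ is the multigraph whose vertex set is the union over the members $s$ of $S$ (with multiplicity) of the right cosets $\langle s\rangle x$, $x\in G$, with one edge labeled $g$ between $\langle s\rangle x$ and $\langle t\rangle y$ ($s,t$ distinct members of $S$) for each $g\in\langle s\rangle x\cap\langle t\rangle y$, and no other edges; a $G$-graph is a multigraph isomorphic (ignoring labels) to some $\Phi(G,S)$. *)

From mathcomp Require Import all_boot all_fingroup.
Set Implicit Arguments. Unset Strict Implicit. Unset Printing Implicit Defensive.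
Local Open Scope group_scope.

Record multigraph := Multigraph {
  mg_vert : finType;
  mg_mult : mg_vert -> mg_vert -> nat }.
Arguments mg_mult : clear implicits.

Definition mg_iso (A B : multigraph) : Prop :=
  exists f : mg_vert A -> mg_vert B,
    bijective f /\ forall u v, mg_mult A u v = mg_mult B (f u) (f v).

(* Phi(G,S): S is a multiset of k elements of G, given as S : 'I_k -> gT. *)
Section Phi.
Variables (gT : finGroupType) (G : {group gT}) (k : nat) (S : 'I_k -> gT).

Notation Phi_vert := {p : 'I_k * {set gT} | p.2 \in rcosets <[S p.1]> G}.

Definition Phi_mult (u v : Phi_vert) : nat :=
  if (val u).1 != (val v).1 then #|(val u).2 :&: (val v).2| else 0.

Definition Phi : multigraph := @Multigraph Phi_vert Phi_mult.
End Phi.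

(* IK_n: vertices are the vertices of K_n (inl v) and the edges of K_n
   (inr e, e a 2-subset of 'I_n); an edge e is adjacent exactly to its two
   end-points. Simple graph: multiplicity 0 or 1. *)
Definition IK_ok (n : nat) (x : 'I_n + {set 'I_n}) : bool :=
  if x is inr e then #|e| == 2 else true.
Notation IK_vert n := {x : 'I_n + {set 'I_n} | IK_ok x}.

Definition IK_adj (n : nat) (x y : IK_vert n) : bool :=
  match proj1_sig x, proj1_sig y with
  | inl v, inr e => v \in e
  | inr e, inl v => v \in e
  | _, _ => false
  end.

Definition IK (n : nat) : multigraph :=
  @Multigraph (IK_vert n) (fun x y : IK_vert n => nat_of_bool (IK_adj x y)).

Definition is_G_graph (Gamma : multigraph) : Prop :=
  exists (gT : finGroupType) (G : {group gT}) (k : nat) (S : 'I_k -> gT),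
    (forall i, S i \in G) /\ mg_iso (Phi G S) Gamma.

From mathcomp Require Import all_boot all_fingroup.
From mathcomp Require Import pgroup cyclic frobenius.
Set Implicit Arguments. Unset Strict Implicit. Unset Printing Implicit Defensive.
Local Open Scope group_scope.

(* As IK_n is triangle-free while all
   the cosets <s>1 contain 1, only two members i, j of S occur; comparing
   degrees, the cosets of B = <S_i> are the points of K_n, so [G : B] = n and
   |B| >= n - 1. Right multiplication by G acts on Phi(G, S) by automorphisms;
   an element fixing two points fixes the edge joining them, hence fixes an
   element of the intersection of two adjacent cosets, hence is trivial. So G
   is a Frobenius group with complement B. The elements lying in no conjugate
   of B, except 1, then form a single B-orbit of size n - 1: they all have the
   same order, which must be every prime divisor of n, and n is a prime power.
   But n = 15, 21 (mod 24) is divisible by 3 and is not a power of 3. *)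

(* K^# for the Frobenius kernel K, obtained without knowing that K is a group. *)
Definition Frobenius_kerD1 (gT : finGroupType) (G H : {set gT}) :=
  (G :\: class_support H^# G) :\ 1.

Section FrobeniusComplement.
Variables (gT : finGroupType) (G H : {group gT}).
Hypothesis frobH : [Frobenius G with complement H].
Local Notation X := (Frobenius_kerD1 G H).

Let tiH : normedTI H^# G H. Proof. by case/andP: frobH. Qed.
Let sHG : H \subset G. Proof. by case/normedTI_memJ_P: tiH. Qed.

Lemma card_Frobenius_kerD1 : #|X| = #|G : H|.-1.
Proof.
have sKG : class_support H^# G \subset G.
  by apply/class_support_subG/(subset_trans (subsetDl _ _)).
have K1 : 1 \notin class_support H^# G.
  by apply/imset2P=> -[a g /setD1P[a1 _] _ /esym/eqP]; rewrite conjg_eq1 (negPf a1).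
have cardGK : #|G :\: class_support H^# G| = #|G : H|.
  rewrite cardsD (setIidPr sKG) (card_support_normedTI tiH) -(Lagrange sHG).
  by rewrite (cardsD1 1 H) group1 add1n mulSn addnK.
by rewrite /Frobenius_kerD1 -cardGK [in RHS](cardsD1 1) !inE group1 K1.
Qed.

Lemma Frobenius_kerD1J x g : x \in X -> g \in G -> x ^ g \in X.
Proof.
rewrite !inE => /and3P[x1 xK xG] gG; rewrite conjg_eq1 x1 groupJ // andbT.
by rewrite memJ_norm // (subsetP (class_support_norm _ _)).
Qed.

Lemma Frobenius_kerD1_regular x : x \in X -> {in H &, injective (conjg x)}.
Proof.
rewrite !inE => /and3P[x1 xK xG] h1 h2 h1H h2H xh12.
apply/eqP; rewrite eq_mulgV1; apply: contraR xK => c1.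
have cH : h1 * h2^-1 \in H^# by rewrite !inE c1 groupM ?groupV.
apply/mem_class_support; rewrite !inE x1 (subsetP (cent1_normedTI tiH cH)) //.
rewrite inE xG; apply/cent1P/commgP/conjg_fixP.
by rewrite conjgM xh12 -conjgM mulgV conjg1.
Qed.

Lemma Frobenius_kerD1_class x : #|G : H|.-1 <= #|H| -> x \in X -> X = x ^: H.
Proof.
move=> leH Xx; apply/esym/eqP; rewrite eqEcard; apply/andP; split.
  by apply/subsetP=> _ /imsetP[h hH ->]; rewrite Frobenius_kerD1J ?(subsetP sHG).
by rewrite card_Frobenius_kerD1 card_in_imset //; apply: Frobenius_kerD1_regular.
Qed.

Lemma Frobenius_index_pnat p :
  #|G : H|.-1 <= #|H| -> prime p -> p %| #|G : H| -> p.-nat #|G : H|.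
Proof.
move=> leH p_pr p_dv_n; set n := #|G : H| in leH p_dv_n *.
have n_gt1 : 1 < n.
  by rewrite indexg_gt1; apply: contra (proj1 (andP frobH)) => sGH; rewrite eqEsubset sHG.
have [x Xx] : exists x, x \in X.
  by apply/set0Pn; rewrite -card_gt0 card_Frobenius_kerD1 -subn1 subn_gt0.
have defX := Frobenius_kerD1_class leH Xx.
have cardH : #|H| = n.-1.
  by rewrite -card_Frobenius_kerD1 defX card_in_imset //; apply: Frobenius_kerD1_regular.
have order_in_X r : prime r -> r %| n -> exists2 y, y \in X & #[y] = r.
  move=> r_pr r_dv_n; have r_dv_G : r %| #|G| by rewrite -(Lagrange sHG) dvdn_mull.
  have [y yG oy] := Cauchy r_pr r_dv_G.
  exists y => //; rewrite !inE yG -order_gt1 oy prime_gt1 //= andbT.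
  apply/imset2P=> -[a g /setD1P[_ aH] _ ya].
  have r_dv1 : r %| 1.
    by rewrite -(eqP (coprimePn (ltnW n_gt1))) dvdn_gcd r_dv_n -cardH -oy ya orderJ order_dvdG.
  by rewrite dvdn1 in r_dv1; rewrite (eqP r_dv1) in r_pr.
apply/pnatP=> [|q q_pr q_dv_n]; first exact: ltnW.
have [y Xy <-] := order_in_X q q_pr q_dv_n; have [z Xz <-] := order_in_X p p_pr p_dv_n.
by move: Xy; rewrite (Frobenius_kerD1_class leH Xz) => /imsetP[h _ ->]; rewrite orderJ inE.
Qed.
End FrobeniusComplement.

Lemma expn3_mod24 e : (3 ^ e %% 24 \in [:: 1; 3; 9])%N.
Proof.
elim: e => [|e IHe] //; rewrite expnS -modnMmr.
by move: IHe; rewrite !inE => /or3P[] /eqP ->.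
Qed.

Lemma not_3nat_mod24 n : (n %% 24 = 15 \/ n %% 24 = 21)%N -> ~~ 3.-nat n.
Proof.
move=> n_mod; apply/negP => /p_natP[e def_n].
by have := expn3_mod24 e; rewrite -def_n; case: n_mod => ->.
Qed.

Section IncidenceGraph.
Variable n : nat.
Local Notation W := (mg_vert (IK n)).
Implicit Types (x y z : W) (a b : 'I_n).

Definition IK_point x : bool := if sval x is inl _ then true else false.

Definition IK_pt a : W := exist _ (inl a) isT.

Definition IK_edge a b : W := insubd (IK_pt a) (inr [set a; b]).

Lemma IK_edgeE a b : a != b -> sval (IK_edge a b) = inr [set a; b].
Proof. by move=> ab; rewrite val_insubd /= cards2 ab. Qed.

Lemma IK_pt_inj : injective IK_pt.
Proof. by move=> a b [->]. Qed.

Lemma IK_pointP x : IK_point x -> {a | x = IK_pt a}.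
Proof. by case: x => [[a|e] ?] //= _; exists a; apply: val_inj. Qed.

Lemma IK_adjC x y : IK_adj x y = IK_adj y x.
Proof. by case: x => [[a|e] ?]; case: y => [[b|e'] ?]. Qed.

Lemma IK_adj_point x y : IK_adj x y -> IK_point x != IK_point y.
Proof. by case: x => [[a|e] ?]; case: y => [[b|e'] ?]. Qed.

Lemma IK_triangle_free x y z : IK_adj x y -> IK_adj y z -> ~~ IK_adj x z.
Proof.
move=> /IK_adj_point xy /IK_adj_point yz; apply/negP => /IK_adj_point.
by move: xy yz; case: (IK_point x); case: (IK_point y); case: (IK_point z).
Qed.

Lemma IK_adj_pt_edge a b c :
  a != b -> IK_adj (IK_pt c) (IK_edge a b) = (c \in [set a; b]).
Proof. by move=> ab; rewrite /IK_adj IK_edgeE. Qed.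

Lemma IK_adj_pt a y : IK_adj (IK_pt a) y ->
  exists2 e : {set 'I_n}, sval y = inr e & a \in e /\ #|e| = 2.
Proof. by case: y => [[b|e] /= e2] // ae; exists e => //; split=> //; apply/eqP. Qed.

Lemma IK_common_nbr a b y :
  a != b -> IK_adj (IK_pt a) y -> IK_adj (IK_pt b) y -> y = IK_edge a b.
Proof.
move=> ab /IK_adj_pt[e ye [ae e2]] /IK_adj_pt[e' ye' [be _]].
move: ye'; rewrite ye => -[ee']; subst e'.
apply: val_inj; rewrite /= IK_edgeE // ye; congr inr; apply/esym/eqP.
by rewrite eqEcard e2 cards2 ab andbT; apply/subsetP => z /set2P[] ->.
Qed.

Lemma card_IK_nbr_pt a : n.-1 <= #|[set y | IK_adj (IK_pt a) y]|.
Proof.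
have edge_inj : {in [set~ a] &, injective (IK_edge a)}.
  move=> b c; rewrite !in_setC1 => ba ca ebc.
  have : IK_adj (IK_pt b) (IK_edge a c) by rewrite -ebc IK_adj_pt_edge 1?eq_sym // set22.
  by rewrite IK_adj_pt_edge 1?eq_sym // => /set2P[/eqP | //]; rewrite (negPf ba).
rewrite -[n in n.-1]card_ord -(cardsC1 a) -(card_in_imset edge_inj) subset_leq_card //.
apply/subsetP => _ /imsetP[b ba ->]; rewrite inE IK_adj_pt_edge ?set21 //.
by rewrite eq_sym -in_setC1.
Qed.

Lemma card_IK_nbr_edge y : ~~ IK_point y -> #|[set x | IK_adj y x]| <= 2.
Proof.
case: y => [[a|e] /= e2] // _; rewrite -(eqP e2) -(card_imset _ IK_pt_inj).
apply/subset_leq_card/subsetP => x; rewrite inE IK_adjC.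
by case: x => [[b|e'] ?] //= be; apply/imsetP; exists b => //; apply: val_inj.
Qed.
End IncidenceGraph.

Section PhiGraph.
Variables (gT : finGroupType) (G : {group gT}) (k : nat) (S : 'I_k -> gT).
Local Notation V := (mg_vert (Phi G S)).
Implicit Types (u v : V) (l : 'I_k).

Definition vidx u : 'I_k := (sval u).1.
Definition vcoset u : {set gT} := (sval u).2.

Definition Phi_adj u v : bool := 0 < mg_mult (Phi G S) u v.

Lemma vcosetP u : exists2 c, c \in G & vcoset u = <[S (vidx u)]> :* c.
Proof. by have /imsetP[c cG cu] := svalP u; exists c; rewrite /vcoset /vidx ?cu ?rcosetE. Qed.

Lemma Phi_vertex_eq u v : vidx u = vidx v -> vcoset u = vcoset v -> u = v.
Proof.
case: u v => [[l C] ?] [[l' C'] ?]; rewrite /vidx /vcoset /= => eq_l eq_C.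
by apply: val_inj; rewrite /= eq_l eq_C.
Qed.

Lemma vcoset_id u t : t \in vcoset u -> vcoset u = <[S (vidx u)]> :* t.
Proof. by have [c _ ->] := vcosetP u => /rcoset_eqP. Qed.

Lemma rcoset_mem_rcosets l t : t \in G -> <[S l]> :* t \in rcosets <[S l]> G.
Proof. by move=> tG; rewrite -rcosetE imset_f. Qed.

Lemma vcoset_sub u : (forall l, S l \in G) -> vcoset u \subset G.
Proof.
move=> SG; have [c cG ->] := vcosetP u.
by apply/subsetP => _ /rcosetP[a aS ->]; rewrite groupM // (subsetP _ a aS) // cycle_subG.
Qed.

(* Junk values: Phi_vertex l t is the coset <S l> when t \notin G, and
   Phi_rmul h u is u when h \notin G. *)
Definition Phi_vertex l t : V :=
  insubd (Sub (l, <[S l]> :* 1) (rcoset_mem_rcosets l (group1 G)) : V) (l, <[S l]> :* t).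

Lemma vidx_Phi_vertex l t : vidx (Phi_vertex l t) = l.
Proof. by rewrite /vidx /Phi_vertex val_insubd; case: ifP. Qed.

Lemma vcoset_Phi_vertex l t : t \in G -> vcoset (Phi_vertex l t) = <[S l]> :* t.
Proof. by move=> tG; rewrite /vcoset /Phi_vertex val_insubd /= rcoset_mem_rcosets. Qed.

Definition Phi_rmul h u : V := insubd u (vidx u, vcoset u :* h).

Lemma vidx_Phi_rmul h u : vidx (Phi_rmul h u) = vidx u.
Proof. by rewrite /vidx /Phi_rmul val_insubd; case: ifP. Qed.

Lemma vcoset_Phi_rmul h u : h \in G -> vcoset (Phi_rmul h u) = vcoset u :* h.
Proof.
move=> hG; have [c cG cu] := vcosetP u.
by rewrite /vcoset /Phi_rmul val_insubd /= -/(vcoset u) cu -rcosetM rcoset_mem_rcosets ?groupM.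
Qed.

Lemma Phi_adjE u v :
  Phi_adj u v = (vidx u != vidx v) && (vcoset u :&: vcoset v != set0).
Proof. by rewrite /Phi_adj /= /Phi_mult; case: ifP; rewrite // card_gt0. Qed.

Lemma Phi_adj_mem u v t :
  vidx u != vidx v -> t \in vcoset u -> t \in vcoset v -> Phi_adj u v.
Proof. by move=> uv tu tv; rewrite Phi_adjE uv; apply/set0Pn; exists t; rewrite inE tu tv. Qed.

Lemma Phi_adj_rmul h u v : h \in G -> Phi_adj u v -> Phi_adj (Phi_rmul h u) (Phi_rmul h v).
Proof.
move=> hG; rewrite Phi_adjE => /andP[uv /set0Pn[t /setIP[tu tv]]].
by apply: (Phi_adj_mem (t := t * h)); rewrite ?vidx_Phi_rmul ?vcoset_Phi_rmul // mem_rcoset mulgK.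
Qed.
End PhiGraph.

Arguments Phi_vertex {gT G k S}.

Section PhiIsoIK.
Variables (n : nat) (gT : finGroupType) (G : {group gT}) (k : nat) (S : 'I_k -> gT).
Hypothesis SG : forall l, S l \in G.
Local Notation V := (mg_vert (Phi G S)).
Local Notation W := (mg_vert (IK n)).
Variables (f : V -> W) (g : W -> V).
Hypotheses (fK : cancel f g) (gK : cancel g f).
Hypothesis f_mult : forall u v, mg_mult (Phi G S) u v = mg_mult (IK n) (f u) (f v).
Implicit Types (u v : V).

Lemma Phi_adj_iso u v : Phi_adj u v = IK_adj (f u) (f v).
Proof. by rewrite /Phi_adj f_mult /=; case: IK_adj. Qed.

Lemma vcosetI_uniq u v t s : vidx u != vidx v ->
  t \in vcoset u :&: vcoset v -> s \in vcoset u :&: vcoset v -> t = s.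
Proof.
move=> uv tuv suv; have /card_le1_eqP le1 : #|vcoset u :&: vcoset v| <= 1.
  by have := f_mult u v; rewrite /= /Phi_mult ifT // /vcoset => ->; apply: leq_b1.
exact/esym/le1.
Qed.

Lemma card_Phi_nbr u (l : 'I_k) :
    l != vidx u -> (forall v, Phi_adj u v -> vidx v = l) ->
  #|[set y | IK_adj (f u) y]| = #|vcoset u|.
Proof.
move=> lu nbr_l; have uG := subsetP (vcoset_sub u SG).
have nbr_f : [set y | IK_adj (f u) y] = f @: [set v | Phi_adj u v].
  apply/setP => y; rewrite inE -{1}(gK y) -Phi_adj_iso.
  apply/idP/imsetP => [uy | [v]]; first by exists (g y); rewrite ?inE.
  by rewrite inE => uv ->; rewrite fK.
have nbrE : [set v | Phi_adj u v] = Phi_vertex l @: vcoset u.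
  apply/setP => v; rewrite inE; apply/idP/imsetP => [uv | [t tu ->]].
    have := uv; rewrite Phi_adjE => /andP[_ /set0Pn[t /setIP[tu tv]]].
    exists t => //; apply: Phi_vertex_eq; first by rewrite vidx_Phi_vertex nbr_l.
    by rewrite vcoset_Phi_vertex ?uG // (vcoset_id tv) nbr_l.
  apply: (Phi_adj_mem (t := t)); rewrite ?vidx_Phi_vertex 1?eq_sym //.
  by rewrite vcoset_Phi_vertex ?uG ?rcoset_refl.
rewrite nbr_f card_imset ?nbrE; last exact: can_inj fK.
apply: card_in_imset => t s tu su eq_ts; pose v : V := Phi_vertex l t.
have vt : vcoset v = <[S l]> :* t by rewrite vcoset_Phi_vertex ?uG.
apply: (vcosetI_uniq (u := u) (v := v)); first by rewrite /v vidx_Phi_vertex eq_sym.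
  by rewrite inE tu vt rcoset_refl.
by rewrite inE su /v eq_ts vcoset_Phi_vertex ?uG ?rcoset_refl.
Qed.

Section TwoIndices.
Variables (u0 : V) (j : 'I_k).
Hypotheses (u0_pt : IK_point (f u0)) (u0j : vidx u0 != j).
Local Notation i := (vidx u0).
Local Notation B := <[S i]>.

Lemma vidx_two u : vidx u = i \/ vidx u = j.
Proof.
case: (eqVneq (vidx u) i) => [|ui]; first by left.
case: (eqVneq (vidx u) j) => [|uj]; first by right.
pose P l : V := Phi_vertex l 1.
have P_adj l l' : l != l' -> IK_adj (f (P l)) (f (P l')).
  move=> ll'; rewrite -Phi_adj_iso; apply: (Phi_adj_mem (t := 1)).
  - by rewrite !vidx_Phi_vertex.
  - by rewrite vcoset_Phi_vertex ?rcoset1.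
  - by rewrite vcoset_Phi_vertex ?rcoset1.
have uj' : j != vidx u by rewrite eq_sym.
have /negP[] := IK_triangle_free (P_adj _ _ u0j) (P_adj _ _ uj').
by apply: P_adj; rewrite eq_sym.
Qed.

Lemma card_IK_nbr_idx u : vidx u = i -> #|[set y | IK_adj (f u) y]| = #|B|.
Proof.
move=> ui; rewrite (card_Phi_nbr (l := j)) ?ui 1?eq_sym // => [|v].
  by have [c _ ->] := vcosetP u; rewrite card_rcoset ui.
by rewrite Phi_adjE ui => /andP[]; case: (vidx_two v) => ->; rewrite ?eqxx.
Qed.

Lemma le_card_compl : n.-1 <= #|B|.
Proof.
have [a fa] := IK_pointP u0_pt.
by rewrite -(card_IK_nbr_idx (u := u0)) // fa card_IK_nbr_pt.
Qed.

Hypothesis n_gt3 : 3 < n.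

Lemma IK_point_idx u : IK_point (f u) = (vidx u == i).
Proof.
have idx_pt v : vidx v = i -> IK_point (f v).
  move=> vi; apply: contraLR n_gt3 => /card_IK_nbr_edge; rewrite -leqNgt.
  by rewrite card_IK_nbr_idx // => /(leq_trans le_card_compl); case: n => [|[|[|]]].
apply/idP/eqP => [fu_pt | /idx_pt //]; case: (vidx_two u) => // uj.
have [c cG cu] := vcosetP u.
have /IK_adj_point : IK_adj (f (Phi_vertex i c)) (f u).
  rewrite -Phi_adj_iso; apply: (Phi_adj_mem (t := c)).
  - by rewrite vidx_Phi_vertex uj.
  - by rewrite vcoset_Phi_vertex ?rcoset_refl.
  - by rewrite cu rcoset_refl.
by rewrite idx_pt ?vidx_Phi_vertex // fu_pt.
Qed.

Lemma index_compl : #|G : B| = n.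
Proof.
pose C a := vcoset (g (IK_pt a)).
have gi a : vidx (g (IK_pt a)) = i by apply/eqP; rewrite -IK_point_idx gK.
have C_inj : injective C.
  move=> a b eq_ab; apply/IK_pt_inj/(can_inj gK).
  by apply: Phi_vertex_eq; rewrite ?gi.
rewrite /indexg -[RHS]card_ord -(card_imset _ C_inj); apply: eq_card => D.
apply/imsetP/imsetP => [[c cG ->] | [a _ ->]].
  have [a fa] : {a | f (Phi_vertex i c) = IK_pt a}.
    by apply: IK_pointP; rewrite IK_point_idx vidx_Phi_vertex.
  by exists a; rewrite // /C -fa fK vcoset_Phi_vertex ?rcosetE.
by have [c cG e] := vcosetP (g (IK_pt a)); exists c; rewrite // /C e gi rcosetE.
Qed.

Lemma rmul_fix_two_points h (P Q : V) :
    h \in G -> vidx P = i -> vidx Q = i -> P != Q ->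
  Phi_rmul h P = P -> Phi_rmul h Q = Q -> h = 1.
Proof.
move=> hG Pi Qi PQ hP hQ.
have [p fp] : {p | f P = IK_pt p} by apply: IK_pointP; rewrite IK_point_idx Pi.
have [q fq] : {q | f Q = IK_pt q} by apply: IK_pointP; rewrite IK_point_idx Qi.
have pq : p != q by apply: contraNneq PQ => epq; rewrite -(fK P) -(fK Q) fp fq epq.
pose w := g (IK_edge p q).
have Pw : Phi_adj P w by rewrite Phi_adj_iso gK fp IK_adj_pt_edge ?set21.
have Qw : Phi_adj Q w by rewrite Phi_adj_iso gK fq IK_adj_pt_edge ?set22.
have hw : Phi_rmul h w = w.
  apply: (can_inj fK); rewrite gK; apply: IK_common_nbr pq _ _.
    by rewrite -fp -Phi_adj_iso -hP Phi_adj_rmul.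
  by rewrite -fq -Phi_adj_iso -hQ Phi_adj_rmul.
move: Pw; rewrite Phi_adjE => /andP[Pw /set0Pn[t tPw]].
have thPw : t * h \in vcoset P :&: vcoset w.
  rewrite -{1}hP -{1}hw !vcoset_Phi_rmul //.
  by move: tPw; rewrite !inE !mem_rcoset !mulgK.
by apply: (mulgI t); rewrite mulg1; apply/esym/(vcosetI_uniq Pw tPw thPw).
Qed.

Lemma compl_conj_trivial a y :
  a \in B -> a != 1 -> y \in G -> a ^ y \in B -> y \in B.
Proof.
move=> aB a1 yG ayB; apply: contraNT a1 => yNB.
have sBG : B \subset G by rewrite cycle_subG.
have ayG := subsetP sBG _ ayB.
rewrite -(conjg_eq1 a y); apply/eqP.
apply: (rmul_fix_two_points (P := Phi_vertex i 1) (Q := Phi_vertex i y));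
  rewrite ?vidx_Phi_vertex //.
- apply: contraNneq yNB => eqPQ; have := rcoset_refl B y.
  by rewrite -(@vcoset_Phi_vertex _ G _ S i y) // -eqPQ vcoset_Phi_vertex // rcoset1.
- apply: Phi_vertex_eq; rewrite ?vidx_Phi_rmul // !vcoset_Phi_rmul ?vcoset_Phi_vertex //.
  by rewrite rcoset1 rcoset_id.
- apply: Phi_vertex_eq; rewrite ?vidx_Phi_rmul // !vcoset_Phi_rmul ?vcoset_Phi_vertex //.
  by rewrite -rcosetM -conjgC rcosetM rcoset_id.
Qed.

Lemma Frobenius_compl : [Frobenius G with complement B].
Proof.
have sBG : B \subset G by rewrite cycle_subG.
have B_gt2 : 2 < #|B| by apply: leq_trans le_card_compl; case: n n_gt3 => [|[|[|]]].
apply/andP; split.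
  by apply/eqP => eqBG; move: n_gt3; rewrite -index_compl eqBG indexgg.
apply/normedTI_memJ_P; split=> //.
  have := cardsD1 1 B; rewrite group1 add1n => cardB.
  by rewrite -card_gt0 -ltnS -cardB ltnW.
move=> x z /setD1P[x1 xB] zG; rewrite !inE conjg_eq1 x1 /=.
by apply/idP/idP => [/(compl_conj_trivial xB x1 zG) | zB]; last exact: groupJ.
Qed.
End TwoIndices.
End PhiIsoIK.

Theorem corollary5 (n : nat) :
  (n %% 24 = 15 \/ n %% 24 = 21)%N -> ~ is_G_graph (IK n).
Proof.
move=> n_mod [gT [G [k [S [SG [f [[g fK gK] f_mult]]]]]]].
have n_gt3 : (3 < n)%N by have := leq_mod n 24; case: n_mod => ->; apply: leq_trans.
have dvd3n : (3 %| n)%N.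
  by rewrite (divn_eq n 24); case: n_mod => ->; rewrite dvdn_add // dvdn_mull.
pose a0 : 'I_n := Ordinal (leq_trans (isT : 0 < 4)%N n_gt3).
pose a1 : 'I_n := Ordinal (leq_trans (isT : 1 < 4)%N n_gt3).
pose u0 := g (IK_pt a0).
have u0_pt : IK_point (f u0) by rewrite gK.
have : Phi_adj u0 (g (IK_edge a0 a1)).
  by rewrite (Phi_adj_iso f_mult) !gK IK_adj_pt_edge ?set21.
rewrite Phi_adjE => /andP[u0j _].
have := Frobenius_index_pnat (Frobenius_compl SG fK gK f_mult u0_pt u0j n_gt3).
rewrite (index_compl SG fK gK f_mult u0_pt u0j n_gt3).
move/(_ 3 (le_card_compl SG fK gK f_mult u0_pt u0j) isT dvd3n).
exact/negP/not_3nat_mod24.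
Qed.
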